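(* For any point $\mathbf c\in\mathcal K_{d;\le2}\cap\mathcal U_{d;\le2}$, the orbit $O_d(\mathbb R)\cdot\mathbf c$ and $\mathcal K_{d;\le2}$ intersect transversally, i.e. at every point $q$ of their intersection $T_q(O_d(\mathbb R)\cdot\mathbf c)+T_q\mathcal K_{d;\le2}=\mathbb R^d\oplus\mathfrak{so}(d,\mathbb R)$.
   Context: Fix $d\ge2$. Consider $\mathbb R^d\oplus\mathfrak{so}(d,\mathbb R)$ with elements $(v,M)$, $v=(c_1,\dots,c_d)^\top$, $M$ real skew-symmetric with $M_{ij}=c_{ij}=-M_{ji}$ for $i<j$; $O_d(\mathbb R)$ acts by $A\cdot(v,M)=(Av,AMA^\top)$. Let $\mathcal K_{d;\le2}=\{(v,M): c_i=0\ (1\le i\le d-1),\ c_{j(i+1)}=0\ (1\le j<i\le d-1),\ c_d>0,\ c_{i(i+1)}>0\ (1\le i\le d-1)\}$. $\mathcal U_{d;\le2}$: on $V_{\mathbb C}=\mathbb C^d\oplus\mathfrak{so}(d,\mathbb C)$ (same coordinates) with $O_d(\mathbb C)=\{A:AA^\top=I\}$ acting the same way, let $L^{(1)}=\{c_1=\dots=c_{d-1}=0\}$ and for $2\le i\le d-1$, $L^{(i)}=\{(v,M)\in L^{(i-1)}: c_{k(d-i+2)}=0,\ 1\le k\le d-i\}$. Let $f_1=c_1^2+\dots+c_d^2$; for $2\le i\le d-1$ let $f_i$ be the $O_d(\mathbb C)$-invariant rational function on $V_{\mathbb C}$ with $f_i|_{L^{(i-1)}}=c_{1(d-i+2)}^2+\dots+c_{(d-i+1)(d-i+2)}^2$;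 let $f_d$ be the invariant rational function with $f_d|_{L^{(d-1)}}=c_{12}^2$ (they exist, have real coefficients, and are unique). $\mathcal U_{d;\le2}$ is the set of real $(v,M)$ in the domain of every $f_k$ with $f_k(v,M)\neq0$ for all $k$. *)

From HB Require Import structures.
From mathcomp Require Import all_boot all_order all_algebra.
From mathcomp Require Import reals.
From mathcomp Require Import complex.
From mathcomp Require mpoly.

Set Implicit Arguments.
Unset Strict Implicit.
Unset Printing Implicit Defensive.
Import Order.TTheory GRing.Theory Num.Theory.
Local Open Scope ring_scope.

(* The space R^d (+) so(d,F): pairs (v, M), v a column vector, M a     *)
(* d x d matrix which is required to be skew_mx-symmetric.                *)
(* Coordinates (1-indexed in the paper) c_i = v (i-1) 0,                *)
(* c_{ij} = M (i-1) (j-1) for i < j.                                    *)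

Definition skew_mx (F : nzRingType) (d : nat) (M : 'M[F]_d) : Prop := M^T = - M.

Definition orth_mx (F : nzRingType) (d : nat) (A : 'M[F]_d) : Prop :=
  A *m A^T = 1%:M.

Definition act_v (F : nzRingType) (d : nat) (A : 'M[F]_d) (v : 'cV[F]_d) :
  'cV[F]_d := A *m v.
Definition act_M (F : nzRingType) (d : nat) (A : 'M[F]_d) (M : 'M[F]_d) :
  'M[F]_d := A *m M *m A^T.

(* c_i = 0 (1 <= i <= d-1), c_{j(i+1)} = 0 (1 <= j < i <= d-1),
   c_d > 0, c_{i(i+1)} > 0 (1 <= i <= d-1). *)
Definition inK (R : realType) (d : nat) (v : 'cV[R]_d) (M : 'M[R]_d) : Prop :=
  skew_mx M /\
  (forall j : 'I_d, (j < d.-1)%N -> v j 0 = 0) /\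
  (forall j l : 'I_d, (j.+1 < l)%N -> M j l = 0) /\
  (forall j : 'I_d, (j : nat) = d.-1 -> 0 < v j 0) /\
  (forall i l : 'I_d, (l : nat) = i.+1 -> 0 < M i l).

(* The linear span in which K_{d;<=2} is open: its tangent space at
   every one of its points. *)
Definition inTK (R : realType) (d : nat) (w : 'cV[R]_d) (N : 'M[R]_d) : Prop :=
  skew_mx N /\
  (forall j : 'I_d, (j < d.-1)%N -> w j 0 = 0) /\
  (forall j l : 'I_d, (j.+1 < l)%N -> N j l = 0).

(* Tangent space of the orbit O_d(R).(v,M) at (v,M): the image of the
   infinitesimal action X |-> d/dt exp(tX).(v,M) |_{t=0}
   = (X v, X M - M X), X in so(d,R). *)
Definition inTorbit (R : realType) (d : nat) (v : 'cV[R]_d) (M : 'M[R]_d)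
  (w : 'cV[R]_d) (N : 'M[R]_d) : Prop :=
  exists X : 'M[R]_d, skew_mx X /\ w = X *m v /\ N = X *m M - M *m X.

(* Polynomial functions on V_C = C^d (+) so(d,C): multivariate polynomials
   in the d + d*d coordinates (v, all entries of M), evaluated at
   points with M skew_mx. *)
Definition coords (F : nzRingType) (d : nat) (v : 'cV[F]_d) (M : 'M[F]_d) :
  'I_(d + d * d) -> F := fun k => (row_mx v^T (mxvec M)) 0 k.

Definition peval (F : comNzRingType) (d : nat) (P : mpoly.mpoly (d + d * d) F)
  (v : 'cV[F]_d) (M : 'M[F]_d) : F := mpoly.meval (coords v M) P.

(* L^{(0)} = V_C, L^{(1)} = {c_1 = ... = c_{d-1} = 0}, and for
   2 <= i <= d-1, L^{(i)} = L^{(i-1)} /\ {c_{k(d-i+2)} = 0, 1 <= k <= d-i}.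
   0-indexed: column d-m+1, rows k < d-m, for 2 <= m <= i. *)
Definition inL (F : nzRingType) (d i : nat) (v : 'cV[F]_d) (M : 'M[F]_d) : Prop :=
  ((1 <= i)%N -> forall j : 'I_d, (j < d.-1)%N -> v j 0 = 0) /\
  (forall m : nat, (2 <= m)%N -> (m <= i)%N ->
     forall k l : 'I_d, (l : nat) = (d - m + 1)%N -> (k < d - m)%N -> M k l = 0).

(* The prescribed restriction g_k of f_k to L^{(k-1)}:
   g_1 = c_1^2 + ... + c_d^2 (on L^{(0)} = V_C);
   g_i = c_{1(d-i+2)}^2 + ... + c_{(d-i+1)(d-i+2)}^2 for 2 <= i <= d-1;
   g_d = c_{12}^2. *)
Definition gfun (F : nzRingType) (d k : nat) (v : 'cV[F]_d) (M : 'M[F]_d) : F :=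
  if (k == 1)%N then \sum_(j < d) v j 0 ^+ 2
  else if (k == d)%N then
    \sum_(j < d) \sum_(l < d | ((j : nat) == 0%N) && ((l : nat) == 1%N)) M j l ^+ 2
  else \sum_(j < d) \sum_(l < d | ((j < d - k + 1)%N) && ((l : nat) == (d - k + 1)%N))
         M j l ^+ 2.

(* P / Q is (a representative of) an O_d(C)-invariant rational function on
   V_C whose restriction to L^{(k-1)} is g_k: Q does not vanish identically
   on L^{(k-1)}, P = g_k Q where Q <> 0 on L^{(k-1)}, and
   P(A.x) Q(x) = P(x) Q(A.x) for all A in O_d(C), x in V_C. *)
Definition fk_rep (R : realType) (d k : nat)
  (P Q : mpoly.mpoly (d + d * d) R[i]) : Prop :=
  (exists (v : 'cV[R[i]]_d) (M : 'M[R[i]]_d),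
      skew_mx M /\ inL (k.-1) v M /\ peval Q v M != 0) /\
  (forall (v : 'cV[R[i]]_d) (M : 'M[R[i]]_d),
      skew_mx M -> inL (k.-1) v M -> peval Q v M != 0 ->
      peval P v M = gfun k v M * peval Q v M) /\
  (forall (A : 'M[R[i]]_d) (v : 'cV[R[i]]_d) (M : 'M[R[i]]_d),
      orth_mx A -> skew_mx M ->
      peval P (act_v A v) (act_M A M) * peval Q v M =
      peval P v M * peval Q (act_v A v) (act_M A M)).

(* P / Q represents the rational function f_k (= P'/Q' for some fk_rep). *)
Definition represents_fk (R : realType) (d k : nat)
  (P Q : mpoly.mpoly (d + d * d) R[i]) : Prop :=
  (exists (v : 'cV[R[i]]_d) (M : 'M[R[i]]_d), skew_mx M /\ peval Q v M != 0) /\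
  exists P' Q', @fk_rep R d k P' Q' /\
    forall (v : 'cV[R[i]]_d) (M : 'M[R[i]]_d), skew_mx M ->
      peval P v M * peval Q' v M = peval P' v M * peval Q v M.

Definition cplx_v (R : realType) (d : nat) (v : 'cV[R]_d) : 'cV[R[i]]_d :=
  map_mx (fun r => (r%:C)%C) v.
Definition cplx_M (R : realType) (d : nat) (M : 'M[R]_d) : 'M[R[i]]_d :=
  map_mx (fun r => (r%:C)%C) M.

Definition fk_defined_nonzero (R : realType) (d k : nat)
  (v : 'cV[R]_d) (M : 'M[R]_d) : Prop :=
  exists P Q, @represents_fk R d k P Q /\
    peval Q (cplx_v v) (cplx_M M) != 0 /\ peval P (cplx_v v) (cplx_M M) != 0.

Definition inU (R : realType) (d : nat) (v : 'cV[R]_d) (M : 'M[R]_d) : Prop :=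
  skew_mx M /\ forall k : nat, (1 <= k <= d)%N -> @fk_defined_nonzero R d k v M.

From HB Require Import structures.
From mathcomp Require Import all_boot all_order all_algebra.
From mathcomp Require Import reals.
From mathcomp Require Import zify ring.
Import GRing.Theory Num.Theory.
Local Open Scope ring_scope.

Set Implicit Arguments.
Unset Strict Implicit.

(* At a point (u, P) of K, u = c e_d with c > 0 and P is skew tridiagonal with
   superdiagonal p_1, ..., p_(d-1) > 0.  The orbit tangent vectors there are the
   (X u, [X, P]) with X skew, and modulo T K only the first d - 1 entries of X u
   (c times the last column of X) and the entries (j, l), j + 1 < l, of [X, P]
   matter.  Such an entry is p_(l-1) X_(j,l-1) plus a combination of entries of
   X in columns l and l + 1, so the strictly upper part of X can be solved for
   column by column, from the last column leftwards. *)

Lemma backward_recursion2 (T : Type) (n : nat) (a0 a1 : T)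
    (F : nat -> T -> T -> T) :
  exists x : nat -> T, (forall m, (n < m)%N -> x m = a0) /\ x n = a1 /\
    forall m, (m < n)%N -> x m = F m (x m.+1) (x m.+2).
Proof.
elim: n F => [|n IHn] F.
  by exists (fun m => if m is 0 then a1 else a0); split=> // [[|m]].
have [x [x_out [x_n x_rec]]] := IHn (fun m => F m.+1).
exists (fun m => if m is m'.+1 then x m' else F 0 (x 0) (x 1)).
split=> [[|m] // /x_out //|]; split=> // [[|m]] // /x_rec //.
Qed.

Lemma sum_ord_adjacent (V : nmodType) (d : nat) (f : nat -> V) (a : nat) :
  (forall b, (d <= b)%N -> f b = 0) ->
  (forall i : 'I_d, i.+1 != a :> nat -> i != a.+1 :> nat -> f i = 0) ->
  \sum_(i < d) f i = f a.-1 + f a.+1.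
Proof.
move=> f_out f_far.
have f_at b : \sum_(i < d | i == b :> nat) f i = f b.
  by rewrite big_ord1_eq; case: ltnP => // /f_out.
rewrite (bigID (fun i : 'I_d => i == a.-1 :> nat)) f_at /=.
rewrite (bigID (fun i : 'I_d => i == a.+1 :> nat)) /=.
rewrite (eq_bigl (fun i : 'I_d => i == a.+1 :> nat)) ?f_at; last first.
  by move=> i; apply/andP/eqP => [[_ /eqP]//|->]; split => //; apply/eqP; lia.
rewrite big1 ?addr0 // => i /andP[/eqP ne1 /eqP ne2].
by apply: f_far; apply/eqP; lia.
Qed.

(* Zero outside the matrix, so that the shifted indices [a.-1] and [a.+1] below
   need no range guards. *)
Definition mx_at (V : nmodType) (m n : nat) (M : 'M[V]_(m, n)) (a b : nat) : V :=
  match insub a : option 'I_m, insub b : option 'I_n with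
  | Some i, Some j => M i j
  | _, _ => 0
  end.

Section MatrixEntries.
Variables (V : nmodType) (m n : nat) (M : 'M[V]_(m, n)).

Lemma mx_atE (i : 'I_m) (j : 'I_n) : mx_at M i j = M i j.
Proof. by rewrite /mx_at !valK. Qed.

Lemma mx_at_outl a b : (m <= a)%N -> mx_at M a b = 0.
Proof. by move=> ha; rewrite /mx_at insubF // ltnNge ha. Qed.

Lemma mx_at_outr a b : (n <= b)%N -> mx_at M a b = 0.
Proof.
by move=> hb; rewrite /mx_at [insub b]insubF ?ltnNge ?hb //; case: insub.
Qed.

End MatrixEntries.

Definition hollow_tridiag (V : nmodType) (d : nat) (P : 'M[V]_d) : Prop :=
  forall i l : 'I_d, i.+1 != l :> nat -> l.+1 != i :> nat -> P i l = 0.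

Lemma skew_band_hollow_tridiag (R : numDomainType) (d : nat) (P : 'M[R]_d) :
  skew_mx P -> (forall j l : 'I_d, (j.+1 < l)%N -> P j l = 0) ->
  hollow_tridiag P.
Proof.
rewrite /skew_mx => skP band i l /eqP ne_il /eqP ne_li.
have P_skew : P i l = - P l i.
  by have := congr1 (fun A : 'M[R]_d => A l i) skP; rewrite !mxE.
case: (ltngtP i l) => [lt_il|lt_li|/val_inj eq_il].
- by apply: band; lia.
- by rewrite P_skew band ?oppr0 //; lia.
- by move: P_skew; rewrite eq_il => /eqP; rewrite eq_sym eqNr => /eqP.
Qed.

Section HollowTridiagonalProducts.
Variables (R : pzRingType) (d : nat) (P : 'M[R]_d).
Hypothesis hP : hollow_tridiag P.

Lemma mulmx_hollow_tridiagE (X : 'M[R]_d) (j l : 'I_d) :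
  (X *m P) j l = mx_at X j l.-1 * mx_at P l.-1 l + mx_at X j l.+1 * mx_at P l.+1 l.
Proof.
pose f b := mx_at X j b * mx_at P b l.
rewrite mxE (eq_bigr (fun i : 'I_d => f i)) => [|i _]; last by rewrite /f !mx_atE.
apply: (@sum_ord_adjacent _ d f) => [b hb|i ne1 ne2].
  by rewrite /f (mx_at_outl _ _ hb) mulr0.
by rewrite /f !mx_atE hP ?mulr0 // eq_sym.
Qed.

Lemma hollow_tridiag_mulmxE (X : 'M[R]_d) (j l : 'I_d) :
  (P *m X) j l = mx_at P j j.-1 * mx_at X j.-1 l + mx_at P j j.+1 * mx_at X j.+1 l.
Proof.
pose f b := mx_at P j b * mx_at X b l.
rewrite mxE (eq_bigr (fun i : 'I_d => f i)) => [|i _]; last by rewrite /f !mx_atE.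
apply: (@sum_ord_adjacent _ d f) => [b hb|i ne1 ne2].
  by rewrite /f (mx_at_outr _ _ hb) mul0r.
by rewrite /f !mx_atE hP ?mul0r // eq_sym.
Qed.

End HollowTridiagonalProducts.

Definition skew_of_upper (R : zmodType) {d : nat} (y : nat -> nat -> R) : 'M[R]_d :=
  \matrix_(i, j) if (i < j)%N then y i j else if (j < i)%N then - y j i else 0.

Lemma skew_of_upper_skew (R : nzRingType) (d : nat) (y : nat -> nat -> R) :
  skew_mx (skew_of_upper y : 'M[R]_d).
Proof.
by apply/matrixP => i j; rewrite !mxE; case: ltngtP; rewrite ?opprK ?oppr0.
Qed.

Lemma mx_at_skew_of_upper (R : zmodType) (d : nat) (y : nat -> nat -> R) a b :
  (forall i k, (d <= k)%N -> y i k = 0) -> (a < b)%N ->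
  mx_at (skew_of_upper y : 'M[R]_d) a b = y a b.
Proof.
move=> y_out lt_ab; case: (ltnP b d) => [lt_bd|le_db]; last first.
  by rewrite mx_at_outr ?y_out.
have lt_ad : (a < d)%N by lia.
rewrite -[a]/(val (Ordinal lt_ad)) -[b]/(val (Ordinal lt_bd)).
by rewrite mx_atE mxE /= lt_ab.
Qed.

Lemma commutator_skew_of_upperE (R : pzRingType) (d : nat) (y : nat -> nat -> R)
    (P : 'M[R]_d) (j l : 'I_d) :
  (forall i k, (d <= k)%N -> y i k = 0) -> hollow_tridiag P -> (j.+1 < l)%N ->
  let X := skew_of_upper y in
  (X *m P - P *m X) j l =
    y j l.-1 * mx_at P l.-1 l + y j l.+1 * mx_at P l.+1 l
    - mx_at P j j.-1 * y j.-1 l - mx_at P j j.+1 * y j.+1 l.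
Proof.
move=> y_out hP lt_jl X.
rewrite [(X *m P - _) j l]mxE [(- (P *m X)) j l]mxE.
rewrite mulmx_hollow_tridiagE // hollow_tridiag_mulmxE //.
have [? ? ? ?] : [/\ j < l.-1, j < l.+1, j.-1 < l & j.+1 < l]%N by split; lia.
by rewrite !mx_at_skew_of_upper // opprD addrA.
Qed.

Lemma inK_tangent_system_solvable (R : realType) (n : nat)
    (u : 'cV[R]_n.+1) (P : 'M[R]_n.+1)
    (w : 'cV[R]_n.+1) (N : 'M[R]_n.+1) :
  inK u P -> exists X : 'M[R]_n.+1, skew_mx X /\
    (forall j : 'I_n.+1, (j < n)%N -> (X *m u) j 0 = w j 0) /\
    (forall j l : 'I_n.+1, (j.+1 < l)%N -> (X *m P - P *m X) j l = N j l).
Proof.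
case=> skP [u_low [band [u_pos p_pos]]].
have hP := skew_band_hollow_tridiag skP band.
pose c := u ord_max 0.
have c_neq0 : c != 0 by apply/lt0r_neq0/u_pos.
(* [F m] solves the (j, m + 1) entry of [X, P] = N for X_(j,m). *)
pose F m (x1 x2 : nat -> R) j := (mx_at N j m.+1 - x2 j * mx_at P m.+2 m.+1
  + mx_at P j j.-1 * x1 j.-1 + mx_at P j j.+1 * x1 j.+1) / mx_at P m m.+1.
have [col [col_out [col_n col_rec]]] :=
  backward_recursion2 n (fun _ => 0) (fun j => mx_at w j 0 / c) F.
pose y i k := col k i.
have y_out i k : (n.+1 <= k)%N -> y i k = 0 by move=> hk; rewrite /y col_out.
exists (skew_of_upper y); split; first exact: skew_of_upper_skew.
split=> [j lt_jn|j l lt_jl].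
  rewrite mxE (bigD1 ord_max) //= big1 ?addr0 => [|i ne_in]; last first.
    by rewrite u_low ?mulr0 //; move: ne_in (ltn_ord i); rewrite -val_eqE /=; lia.
  rewrite -mx_atE mx_at_skew_of_upper //= /y col_n (mx_atE w j 0) divfK //.
have [m hm lt_mn] : exists2 m, (l : nat) = m.+1 & (m < n)%N.
  by exists l.-1; have := ltn_ord l; lia.
have p_neq0 : mx_at P m m.+1 != 0.
  have lt_m : (m < n.+1)%N by lia.
  have := p_pos (Ordinal lt_m) (Ordinal (lt_mn : (m.+1 < n.+1)%N)) erefl.
  by rewrite -mx_atE => /lt0r_neq0.
rewrite commutator_skew_of_upperE // -(mx_atE N) hm /= /y col_rec //= /F divfK //.
by ring.
Qed.

Lemma skew_mx_commutator (R : comNzRingType) (d : nat) (X P : 'M[R]_d) :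
  skew_mx X -> skew_mx P -> skew_mx (X *m P - P *m X).
Proof.
rewrite /skew_mx => skX skP.
by rewrite raddfB /= !trmx_mul skX skP !mulNmx !mulmxN !opprK opprB.
Qed.

Lemma inK_orbit_tangent_complement (R : realType) (n : nat) (u : 'cV[R]_n.+1)
    (P : 'M[R]_n.+1) (w : 'cV[R]_n.+1) (N : 'M[R]_n.+1) :
  inK u P -> skew_mx N ->
  exists X : 'M[R]_n.+1, skew_mx X /\ inTK (w - X *m u) (N - (X *m P - P *m X)).
Proof.
move=> hK skN; have [X [skX [Xu XP]]] := inK_tangent_system_solvable w N hK.
have skP : skew_mx P by case: hK.
have skC := skew_mx_commutator skX skP.
exists X; split=> //; split.
  by rewrite /skew_mx in skN skC *; rewrite raddfB /= skN skC [RHS]opprD.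
split=> [j lt_jn|j l lt_jl].
  by rewrite [(w - _) j 0]mxE [(- (X *m u)) j 0]mxE Xu // subrr.
by rewrite [(N - _) j l]mxE [(- (X *m P - _)) j l]mxE XP // subrr.
Qed.

Theorem lemma4p2 (R : realType) (d : nat) (hd : (2 <= d)%N)
  (v : 'cV[R]_d) (M : 'M[R]_d) :
  inK v M -> inU v M ->
  forall A : 'M[R]_d, orth_mx A ->
  inK (act_v A v) (act_M A M) ->
  forall (w : 'cV[R]_d) (N : 'M[R]_d), skew_mx N ->
  exists (w1 : 'cV[R]_d) (N1 : 'M[R]_d) (w2 : 'cV[R]_d) (N2 : 'M[R]_d),
    inTorbit (act_v A v) (act_M A M) w1 N1 /\ inTK w2 N2 /\
    w = w1 + w2 /\ N = N1 + N2.
Proof.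
case: d hd v M => [//|n] _ v M _ _ A _ hK w N skN.
have [X [skX hTK]] := inK_orbit_tangent_complement w hK skN.
set u := act_v A v in hTK *; set P := act_M A M in hTK *.
exists (X *m u), (X *m P - P *m X), (w - X *m u), (N - (X *m P - P *m X)).
by split; [exists X | split; last by split; rewrite addrC subrK].
Qed.
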